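(* Let $p$ be an odd prime. If $n>m$ and $n-m$ is divisible by $2p-2$, then $$\frac{\Phi_n}{\Phi_m}\equiv\Phi_{n-m}\pmod{p^{1+\nu_p(n-m)}},$$ i.e. $\Phi_n/\Phi_m-\Phi_{n-m}\in p^{1+\nu_p(n-m)}A$, where $\nu_p$ denotes the $p$-adic valuation.
   Context: $A$ is the ring of degree zero stable operations in $p$-local complex $K$-theory. Fix $q$ primitive mod $p^2$, $\Psi^q\in A$ the Adams operation, $q_i=q^{(-1)^i\lfloor i/2\rfloor}$ for $i\ge1$, $\Theta_n(X)=\prod_{i=1}^n(X-q_i)$, and $\Phi_n=\Theta_n(\Psi^q)\in A$. For $n>m$, $\Theta_m(X)$ divides $\Theta_n(X)$, and $\Phi_n/\Phi_m$ denotes the value at $\Psi^q$ of the polynomial $\Theta_n(X)/\Theta_m(X)$. *)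

From HB Require Import structures.
From mathcomp Require Import all_boot all_order all_algebra.
Set Implicit Arguments. Unset Strict Implicit. Unset Printing Implicit Defensive.
Import Order.TTheory GRing.Theory Num.Theory.
Local Open Scope ring_scope.

Definition Zloc (p : nat) (r : rat) : Prop := ~~ ((p%:Z) %| denq r)%Z.

(* Laurent polynomials over Q: (g, N) represents w^{-N} g(w). *)
Definition laur := ({poly rat} * nat)%type.
Definition leval (f : laur) (x : rat) : rat := f.1.[x] / x ^+ f.2.

(* p-local K_0(K) (Adams--Clarke): Laurent polynomials f with f(k) in Z_(p)
   for every integer k prime to p. *)
Definition K0K (p : nat) (f : laur) : Prop :=
  forall k : int, ~~ ((p%:Z) %| k)%Z -> Zloc p (leval f k%:~R).

(* The ring A of degree-zero stable operations in p-local K-theory, realized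
   as the dual Hom_{Z_(p)}(K_0(K)_(p), Z_(p)); such a map extends uniquely to a
   Q-linear functional on Q[w,w^{-1}], which is what we record. *)
Definition inA (p : nat) (phi : laur -> rat) : Prop :=
  [/\ (forall g N, phi (g, N) = phi ('X * g, N.+1)),
      (forall g1 g2 N, phi (g1 + g2, N) = phi (g1, N) + phi (g2, N)),
      (forall (c : rat) g N, phi (c *: g, N) = c * phi (g, N)) &
      (forall f, K0K p f -> Zloc p (phi f))].

(* The operation P(Psi^q) for P in Q[X]: Psi^(q^j) pairs f with f(q^j). *)
Definition opPoly (q : int) (P : {poly rat}) (f : laur) : rat :=
  \sum_(j < size P) P`_j * leval f ((q%:~R : rat) ^+ j).

Definition qi (q : int) (i : nat) : rat :=
  if odd i then (q%:~R : rat) ^- i./2 else (q%:~R : rat) ^+ i./2.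

Definition Theta (q : int) (n : nat) : {poly rat} :=
  \prod_(1 <= i < n.+1) ('X - (qi q i)%:P).

Definition primitive_mod (q : int) (N : nat) : Prop :=
  coprimez q N /\
  (forall e : nat, (q ^+ e == 1 %[mod N%:Z])%Z = (totient N %| e)%N).

(* Write n = m + 2t.  The roots of Theta_n / Theta_m are the q^-k for t
   consecutive k and the q^(k+1) for t consecutive k; those of Theta_2t are the
   same with both ranges starting at 0.  As (p-1) p^nu divides t, Euler's
   theorem gives q^t = 1 mod p^(1+nu), so every factor X - q^(+-k) is congruent
   to its shift by t in Z_(p)[X] modulo p^(1+nu); sliding the two ranges back
   one step at a time gives Theta_n / Theta_m = Theta_2t mod p^(1+nu) Z_(p)[X].
   Finally a polynomial with coefficients in Z_(p), evaluated at Psi^q, is an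
   element of A. *)

From HB Require Import structures.
From mathcomp Require Import all_boot all_order all_algebra.
From mathcomp Require Import ring cyclic.
Import Order.TTheory GRing.Theory Num.Theory.
Set Implicit Arguments. Unset Strict Implicit. Unset Printing Implicit Defensive.
Local Open Scope ring_scope.

Lemma denq_dvdz (x : rat) (a b : int) : b != 0 -> x * b%:~R = a%:~R -> (denq x %| b)%Z.
Proof.
move=> b_neq0 xb; have : (denq x %| numq x * b)%Z.
  suff -> : numq x * b = a * denq x by exact: dvdz_mull.
  by apply: (@intr_inj rat); rewrite !rmorphM /= numqE -xb mulrAC.
by rewrite Gauss_dvdzr // coprimezE coprime_sym coprime_num_den.
Qed.

(* Z_(p), as the rationals whose denominator is coprime to p: this agrees with
   Zloc for prime p, and is a subring for every p. *)
Definition plocal (p : nat) : pred rat := fun x => coprime `|denq x| p.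

Section Plocal.
Variable p : nat.

Lemma plocal_mulz (x : rat) (a b : int) :
  b != 0 -> coprime `|b| p -> x * b%:~R = a%:~R -> x \in plocal p.
Proof. by move=> b_neq0 bp /(denq_dvdz b_neq0); rewrite dvdzE => /coprime_dvdl; apply. Qed.

Lemma plocal_subring_closed : subring_closed (plocal p).
Proof.
have den_neq0 x y : denq x * denq y != 0 by rewrite mulf_neq0 ?denq_neq0.
have denM x y : x \in plocal p -> y \in plocal p -> coprime `|denq x * denq y| p.
  by rewrite !unfold_in abszM coprimeMl => -> ->.
split=> [|x y xp yp|x y xp yp]; first by rewrite unfold_in /= coprime1n.
- apply: (plocal_mulz (den_neq0 x y) (denM x y xp yp)
                      (a := numq x * denq y - numq y * denq x)).
  by rewrite rmorphB !rmorphM /= !numqE; ring.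
- apply: (plocal_mulz (den_neq0 x y) (denM x y xp yp) (a := numq x * numq y)).
  by rewrite !rmorphM /= !numqE; ring.
Qed.

HB.instance Definition _ :=
  GRing.isSubringClosed.Build rat (plocal p) plocal_subring_closed.

Lemma plocal_invz (b : int) : coprime `|b| p -> b%:~R^-1 \in plocal p.
Proof.
have [-> _|b_neq0 bp] := eqVneq b 0; first by rewrite invr0 rpred0.
by rewrite unfold_in /= denqVz.
Qed.

Lemma Zloc_plocal x : prime p -> Zloc p x = (x \in plocal p).
Proof. by move=> p_pr; rewrite /Zloc unfold_in /= coprime_sym prime_coprime // dvdzE. Qed.

End Plocal.

Lemma rpred_divz (F : numFieldType) (S : subringClosed F) (a b : int) :
  (b %| a)%Z -> a%:~R / b%:~R \in S.
Proof.
case/dvdzP=> z ->; have [->|b_neq0] := eqVneq b 0; first by rewrite invr0 mulr0 rpred0.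
by rewrite intrM mulfK ?intr_eq0 // rpred_int.
Qed.

Lemma coprime_prime_neq0 (p : nat) (q : int) : prime p -> coprime `|q| p -> q != 0.
Proof. by move=> p_pr; apply: contraTneq => ->; rewrite /coprime /= gcd0n gtn_eqF ?prime_gt1. Qed.

(* Vacuous for d = 0, as 0^-1 = 0. *)
Definition cong_mod (F : fieldType) (S : {pred F}) (d : F) (P Q : {poly F}) :=
  d^-1 *: (P - Q) \is a polyOver S.

Section PolyCongruence.
Variables (F : fieldType) (S : subringClosed F) (d : F).
Local Notation cong_mod := (cong_mod S d).

Lemma cong_mod_refl P : cong_mod P P.
Proof. by rewrite /cong_mod subrr scaler0 rpred0. Qed.

Lemma cong_mod_trans P Q R : cong_mod P Q -> cong_mod Q R -> cong_mod P R.
Proof. by move=> PQ QR; rewrite /cong_mod -[P - R](subrKA Q) scalerDr rpredD. Qed.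

Lemma cong_modM P1 Q1 P2 Q2 :
  cong_mod P1 Q1 -> cong_mod P2 Q2 ->
  Q1 \is a polyOver S -> P2 \is a polyOver S -> cong_mod (P1 * P2) (Q1 * Q2).
Proof.
move=> PQ1 PQ2 Q1S P2S; rewrite /cong_mod.
have -> : P1 * P2 - Q1 * Q2 = (P1 - Q1) * P2 + Q1 * (P2 - Q2) by ring.
by rewrite scalerDr scalerAl scalerAr rpredD ?rpredM.
Qed.

Lemma cong_modXsubC a b : cong_mod ('X - a%:P) ('X - b%:P) = ((b - a) / d \in S).
Proof. by rewrite /cong_mod opprB addrC subrKA -polyCB scale_polyC polyOverC mulrC. Qed.

Lemma cong_mod_prod_shift (t : nat) (G : nat -> {poly F}) :
  (forall k, G k \is a polyOver S) -> (forall k, cong_mod (G (k + t)%N) (G k)) ->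
  forall c, cong_mod (\prod_(c <= k < c + t) G k) (\prod_(0 <= k < t) G k).
Proof.
move=> GS G_periodic; elim=> [|c IH]; first exact: cong_mod_refl.
apply: cong_mod_trans IH; case: t G_periodic => [|t] G_periodic.
  by rewrite !addn0 !big_geq // cong_mod_refl.
have lt_c : (c < c + t.+1)%N by rewrite addnS ltnS leq_addr.
rewrite addSn (big_nat_recr _ _ _ lt_c) (big_ltn lt_c) [G c * _]mulrC.
apply: cong_modM (cong_mod_refl _) (G_periodic c) _ (GS _).
by apply: rpred_prod => k _; apply: GS.
Qed.

End PolyCongruence.

Section PowerFactors.
Variables (F : fieldType) (x : F).

(* For x = q these are the factors X - q_(2k+2) and X - q_(2k+1) of Theta. *)
Definition Xsub_pow (k : nat) : {poly F} := 'X - (x ^+ k.+1)%:P.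
Definition Xsub_powV (k : nat) : {poly F} := 'X - (x ^- k)%:P.

Variables (S : subringClosed F) (d : F) (t : nat).
Hypotheses (x_neq0 : x != 0) (xS : x \in S) (xVS : x^-1 \in S).
Hypothesis xt_cong : (x ^+ t - 1) / d \in S.

Lemma Xsub_pow_periodic k : cong_mod S d (Xsub_pow (k + t)) (Xsub_pow k).
Proof.
rewrite cong_modXsubC.
have -> : x ^+ k.+1 - x ^+ (k + t).+1 = - x ^+ k.+1 * (x ^+ t - 1).
  by rewrite -addSn exprD; ring.
by rewrite -mulrA rpredM ?rpredN ?rpredX.
Qed.

Lemma Xsub_powV_periodic k : cong_mod S d (Xsub_powV (k + t)) (Xsub_powV k).
Proof.
rewrite cong_modXsubC.
have -> : x ^- k - x ^- (k + t) = x ^- (k + t) * (x ^+ t - 1).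
  have xt_neq0 : x ^+ t != 0 by rewrite expf_neq0.
  by rewrite mulrBr mulr1 exprD invfM -mulrA mulVf ?mulr1.
by rewrite -mulrA rpredM // -exprVn rpredX.
Qed.

Lemma Xsub_pow_prod_shift c1 c2 :
  cong_mod S d
    (\prod_(c1 <= k < c1 + t) Xsub_powV k * \prod_(c2 <= k < c2 + t) Xsub_pow k)
    (\prod_(0 <= k < t) Xsub_powV k * \prod_(0 <= k < t) Xsub_pow k).
Proof.
have XV_S k : Xsub_powV k \is a polyOver S by rewrite polyOverXsubC -exprVn rpredX.
have X_S k : Xsub_pow k \is a polyOver S by rewrite polyOverXsubC rpredX.
apply: cong_modM; rewrite ?rpred_prod //.
- exact: cong_mod_prod_shift Xsub_powV_periodic c1.
- exact: cong_mod_prod_shift Xsub_pow_periodic c2.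
Qed.

End PowerFactors.

Section ThetaFactorization.
Variable q : int.
Local Notation x := (q%:~R : rat).

Lemma Theta_split n :
  Theta q n = \prod_(0 <= k < uphalf n) Xsub_powV x k * \prod_(0 <= k < n./2) Xsub_pow x k.
Proof.
elim: n => [|n IH]; first by rewrite /Theta !big_geq // mulr1.
rewrite /Theta big_nat_recr //= -/(Theta q n) IH /qi /= uphalf_half.
case: (odd n) => /=; rewrite ?add0n ?add1n.
- by rewrite [X in _ = _ * X]big_nat_recr //= mulrA.
- by rewrite [X in _ = X * _]big_nat_recr //= mulrAC.
Qed.

Lemma Theta_addn_double m t :
  Theta q (m + t.*2) = Theta q m *
    (\prod_(uphalf m <= k < uphalf m + t) Xsub_powV x k *
     \prod_(m./2 <= k < m./2 + t) Xsub_pow x k).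
Proof.
have uphalfD : uphalf (m + t.*2) = (uphalf m + t)%N.
  by rewrite !uphalfE -addSn halfD odd_double andbF half_double.
have halfD : (m + t.*2)./2 = (m./2 + t)%N.
  by rewrite halfD odd_double andbF half_double.
rewrite !Theta_split uphalfD halfD !(big_cat_nat (leq0n _) (leq_addr _ _)).
by rewrite mulrACA.
Qed.

Lemma Theta_divp_cong (p : nat) (e : int) m t :
  prime p -> coprime `|q| p -> (e %| q ^+ t - 1)%Z ->
  cong_mod (plocal p) e%:~R (Theta q (m + t.*2) %/ Theta q m) (Theta q t.*2).
Proof.
move=> p_pr qp e_dvd.
rewrite Theta_addn_double mulKp ?monic_neq0 ?monic_prod_XsubC //.
rewrite Theta_split uphalf_double half_double.
apply: Xsub_pow_prod_shift; rewrite ?intr_eq0 ?rpred_int ?plocal_invz //.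
  exact: coprime_prime_neq0 p_pr qp.
by rewrite -[1]/(1%:~R) -rmorphXn -rmorphB rpred_divz.
Qed.

End ThetaFactorization.

(* [t] even lets us replace [q] by [`|q|] and use Euler's theorem in [nat]. *)
Lemma dvdz_exp_totient_sub1 (N t : nat) (q : int) :
  coprime `|q| N -> (totient N %| t)%N -> ~~ odd t -> (N%:Z %| q ^+ t - 1)%Z.
Proof.
move=> qN /dvdnP[u ->] t_even.
have -> : q ^+ (u * totient N) = (`|q| ^ (u * totient N))%N%:Z.
  by rewrite -abszX gez0_abs ?exprn_even_ge0.
rewrite -eqz_mod_dvd -[1]/(1%N%:Z) !modz_nat eqz_nat.
by rewrite mulnC expnM -modnXm Euler_exp_totient // modnXm exp1n.
Qed.

Lemma dvdz_exp_half_sub1 (p d : nat) (q : int) :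
  prime p -> odd p -> coprime `|q| p -> (2 * p - 2 %| d)%N ->
  ((p ^ (1 + logn p d))%N%:Z %| q ^+ d./2 - 1)%Z.
Proof.
move=> p_pr p_odd qp.
have p1_gt0 : (0 < p.-1)%N by rewrite -ltnS prednK ?prime_gt1 ?prime_gt0.
have p1_even : ~~ odd p.-1 by rewrite -(prednK (prime_gt0 p_pr)) in p_odd.
have -> : (2 * p - 2 = p.-1 * 2)%N by rewrite mulnC -subn1 mulnBl mul1n.
move=> /dvdnP[u d_def]; have -> : d./2 = (u * p.-1)%N by rewrite d_def mulnA muln2 doubleK.
apply: dvdz_exp_totient_sub1; last by rewrite oddM negb_and p1_even orbT.
  by rewrite coprimeXr.
rewrite add1n totient_pfactor // [in X in (_ %| X)%N]mulnC dvdn_pmul2l //.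
rewrite -(@Gauss_dvdl _ _ (p.-1 * 2)%N) /=; first by rewrite -d_def pfactor_dvdnn.
apply: coprimeXl; rewrite coprimeMr coprimen2 p_odd andbT.
by have := coprimeSn p.-1; rewrite prednK ?prime_gt0.
Qed.

Lemma leval_mulX (g : {poly rat}) N x : x != 0 -> leval ('X * g, N.+1) x = leval (g, N) x.
Proof.
by move=> x_neq0; rewrite /leval /= [_ * g]mulrC hornerMX exprS invfM mulrA mulfK.
Qed.

Section StableOperations.
Variables (p : nat) (q : int).
Hypotheses (p_pr : prime p) (qp : coprime `|q| p).

Lemma opPolyZ c P f : opPoly q (c *: P) f = c * opPoly q P f.
Proof.
have [->|c_neq0] := eqVneq c 0; first by rewrite scale0r mul0r /opPoly size_poly0 big_ord0.
by rewrite /opPoly size_scale // mulr_sumr; apply: eq_bigr => j _; rewrite coefZ mulrA.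
Qed.

Lemma inA_opPoly P : P \is a polyOver (plocal p) -> inA p (opPoly q P).
Proof.
move=> /polyOverP P_loc.
have q_neq0 : (q%:~R : rat) != 0 by rewrite intr_eq0 (coprime_prime_neq0 p_pr qp).
split.
- by move=> g N; apply: eq_bigr => j _; rewrite leval_mulX // expf_neq0.
- move=> g1 g2 N; rewrite -big_split; apply: eq_bigr => j _.
  by rewrite /leval /= hornerD mulrDl mulrDr.
- move=> c g N; rewrite /opPoly mulr_sumr; apply: eq_bigr => j _.
  by rewrite /leval /= hornerZ -mulrA mulrCA.
- move=> f f_K0K; rewrite Zloc_plocal //; apply: rpred_sum => j _; apply: rpredM => //.
  have qj : ~~ (p%:Z %| q ^+ j)%Z.
    by rewrite dvdzE abszX -prime_coprime // coprime_sym coprimeXl.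
  by have := f_K0K _ qj; rewrite Zloc_plocal // rmorphXn.
Qed.

Lemma opPoly_cong_mod (d : rat) P Q :
  d != 0 -> cong_mod (plocal p) d P Q ->
  exists psi, inA p psi /\ forall f, opPoly q (P - Q) f = d * psi f.
Proof.
move=> d_neq0 PQ; exists (opPoly q (d^-1 *: (P - Q))); split; first exact: inA_opPoly.
by move=> f; rewrite opPolyZ mulVKf.
Qed.

End StableOperations.

Theorem lemma3p7 (p : nat) (q : int) (n m : nat) :
  prime p -> odd p -> primitive_mod q (p ^ 2) ->
  (m < n)%N -> ((2 * p - 2) %| (n - m))%N ->
  exists psi : laur -> rat,
    inA p psi /\
    forall f : laur,
      opPoly q (Theta q n %/ Theta q m - Theta q (n - m)) f
      = (p ^ (1 + logn p (n - m)))%N%:R * psi f.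
Proof.
move=> p_pr p_odd [q_cop _] lt_mn dvd_nm.
have qp : coprime `|q| p by move: q_cop; rewrite coprimezE /= coprime_pexpr.
set d := (n - m)%N in dvd_nm *.
have d_even : ~~ odd d.
  rewrite -dvdn2; apply: dvdn_trans dvd_nm.
  by rewrite -[X in (_ - X)%N](muln1 2) -mulnBr dvdn_mulr.
have := Theta_divp_cong m p_pr qp (dvdz_exp_half_sub1 p_pr p_odd qp dvd_nm).
rewrite even_halfK // (subnKC (ltnW lt_mn)) => cong_nm.
apply: (opPoly_cong_mod p_pr qp _ cong_nm).
by rewrite intr_eq0 eqz_nat expn_eq0 negb_and -lt0n prime_gt0.
Qed.
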